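(* Let $m\ge 2$, $\alpha\in[0,1]$, $\pi$ a permutation of $E_{m-1}=\{1,\dots,m-1\}$ and $V_\alpha$ as defined below. Then $V_\alpha$ is ergodic: for every $\mathbf{x}\in S^{m-1}$ the limit $\lim_{n\to\infty}\frac1n\sum_{k=0}^{n-1}V_\alpha^k(\mathbf{x})$ exists.
   Context: $S^{m-1}=\{\mathbf{x}=(x_1,\dots,x_m)\in\mathbb{R}^m: x_i\ge 0,\ \sum_{i=1}^m x_i=1\}$. For $\alpha\in[0,1]$ the operator $V_\alpha\colon S^{m-1}\to S^{m-1}$ is $\mathbf{x}\mapsto\mathbf{x}'$ with $x'_k=2x_m(\alpha x_k+(1-\alpha)x_{\pi(k)})$ for $k=1,\dots,m-1$ and $x'_m=x_m^2+\big(\sum_{i=1}^{m-1}x_i\big)^2$; $V_\alpha^k$ is its $k$-fold iterate ($V_\alpha^0=\mathrm{Id}$). *)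

From HB Require Import structures.
From mathcomp Require Import all_boot all_order all_algebra all_fingroup.
From mathcomp Require Import all_classical all_reals all_analysis.
Set Implicit Arguments. Unset Strict Implicit. Unset Printing Implicit Defensive.
Import Order.TTheory GRing.Theory Num.Theory.
Local Open Scope ring_scope.

(* Points of R^m are row vectors x : 'rV[R]_m; the coordinate x_{i+1} of the
   paper is x 0 i for i : 'I_m (0-based indexing).  The paper's index set
   E_{m-1} = {1,...,m-1} corresponds to 'I_(m.-1) = {0,...,m-2}. *)

Definition simplex (R : realType) (m : nat) (x : 'rV[R]_m) : Prop :=
  (forall i, 0 <= x 0 i) /\ \sum_(i < m) x 0 i = 1.

Definition xlast (R : realType) (m : nat) (x : 'rV[R]_m) : R :=
  \sum_(i < m | val i == m.-1) x 0 i.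

Definition Valpha (R : realType) (m : nat) (alpha : R) (pi : {perm 'I_(m.-1)})
  (x : 'rV[R]_m) : 'rV[R]_m :=
  \row_(k < m)
    match (insub (val k) : option 'I_(m.-1)) with
    | Some j => 2 * xlast x *
                (alpha * x 0 k + (1 - alpha) * x 0 (widen_ord (leq_pred m) (pi j)))
    | None => xlast x ^+ 2 + (\sum_(i < m | (val i < m.-1)%N) x 0 i) ^+ 2
    end.

(* Write t_n for the last coordinate of V^n x and s_n for the sum of the
   others.  On the simplex t_n + s_n = 1, t_{n+1} = t_n^2 + s_n^2 and
   s_{n+1} = 2 t_n s_n, so from n = 1 on (t_n) is nonincreasing in [1/2, 1]
   and converges.  The other coordinates satisfy y_{n+1} = 2 t_n L y_n with
   L f = alpha f + (1 - alpha) f o pi, hence y_n = (s_n / s_0) L^n y_0 with a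
   convergent scalar factor.  For alpha < 1 every f splits as Q + g - L g,
   where Q is the average of f along the orbits of pi (an L-invariant
   function), so the Cesaro means of L^n f telescope to Q; for alpha = 1, L
   is the identity.  A convergent factor times a bounded Cesaro-convergent
   sequence is Cesaro convergent. *)

From HB Require Import structures.
From mathcomp Require Import all_boot all_order all_algebra all_fingroup.
From mathcomp Require Import all_classical all_reals all_analysis.
From mathcomp Require Import ring lra.
Import Order.TTheory GRing.Theory Num.Theory.
Import numFieldTopology.Exports numFieldNormedType.Exports.
Local Open Scope classical_set_scope.
Local Open Scope ring_scope.

Lemma sumr_ord_telescope (V : zmodType) (h : nat -> V) n :
  \sum_(k < n) (h k - h k.+1) = h 0%N - h n.
Proof.
rewrite -(big_mkord xpredT (fun k => h k - h k.+1)) -opprB.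
rewrite -(telescope_sumr _ (leq0n n)) -sumrN.
by apply: eq_bigr => k _; rewrite opprB.
Qed.

Section CesaroMean.
Context {R : realType}.
Implicit Types u a b : nat -> R.

Definition cesaro_mean u n : R := n%:R^-1 * \sum_(k < n) u k.

Lemma cvg_cesaro_mean {u} {l : R} : u @ \oo --> l -> cesaro_mean u @ \oo --> l.
Proof.
move=> /cesaro ul; rewrite -cvg_shiftS; apply: cvg_trans ul.
apply: near_eq_cvg; near=> n => /=.
by rewrite /cesaro_mean /arithmetic_mean /= seriesEord.
Unshelve. all: by end_near. Qed.

Lemma cvg_invn0 : (fun n : nat => (n%:R : R)^-1) @ \oo --> 0.
Proof. by rewrite -cvg_shiftS; exact: cvg_harmonic. Qed.

Lemma cvg0_mul_bounded {a b} {B : R} : a @ \oo --> 0 -> (forall n, `|b n| <= B) ->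
  (fun n => a n * b n) @ \oo --> 0.
Proof.
move=> a0 bB; apply/cvgrPdist_le => e e0.
have B1 : 0 < B + 1 by have := le_trans (normr_ge0 _) (bB 0%N); lra.
move/cvgrPdist_le: a0 => /(_ (e / (B + 1))) a0.
have /a0 : 0 < e / (B + 1) by rewrite divr_gt0.
apply: filterS => n; rewrite !sub0r !normrN normrM => an.
have bn : `|b n| <= B + 1 by have := bB n; lra.
apply: le_trans (ler_pM (normr_ge0 _) (normr_ge0 _) an bn) _.
by rewrite divfK // gt_eqF.
Qed.

Lemma cvg_cesaro_mean_mul {a b} {c B l : R} : a @ \oo --> c ->
  (forall n, `|b n| <= B) -> cesaro_mean b @ \oo --> l ->
  cesaro_mean (fun n => a n * b n) @ \oo --> c * l.
Proof.
move=> ac bB bl.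
have -> : cesaro_mean (fun n => a n * b n) =
    (fun n => cesaro_mean (fun k => (a k - c) * b k) n + c * cesaro_mean b n).
  apply/funext => n; rewrite /cesaro_mean mulrCA -mulrDr; congr (_ * _).
  rewrite mulr_sumr -big_split /=; apply: eq_bigr => k _; ring.
rewrite -[c * l]add0r; apply: cvgD; last exact: cvgM (cvg_cst c) bl.
apply: cvg_cesaro_mean; apply: cvg0_mul_bounded bB.
by rewrite -(subrr c); apply: cvgB => //; exact: cvg_cst.
Qed.

Lemma cvg_cesaro_mean_coboundary {w h : nat -> R} {q B : R} :
  (forall n, w n = q + h n - h n.+1) -> (forall n, `|h n| <= B) ->
  cesaro_mean w @ \oo --> q.
Proof.
move=> wE hB.
have meanE n : (0 < n)%N -> cesaro_mean w n = q + n%:R^-1 * (h 0%N - h n).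
  move=> n0; rewrite /cesaro_mean; under eq_bigr => k _ do rewrite wE -addrA.
  rewrite big_split /= sumr_ord_telescope sumr_const card_ord mulrDr.
  by rewrite -[q *+ n]mulr_natr mulrCA mulVf ?mulr1 // pnatr_eq0 -lt0n.
rewrite -[q]addr0.
apply: cvg_trans (_ : (fun n => q + n%:R^-1 * (h 0%N - h n)) @ \oo --> _).
  by apply: near_eq_cvg; near=> n; rewrite meanE //; near: n; exists 1%N.
apply: cvgD; first exact: cvg_cst.
apply: (@cvg0_mul_bounded _ (fun n => h 0%N - h n) (B + B) cvg_invn0) => n.
by apply: le_trans (ler_normB _ _) _; apply: lerD.
Unshelve. all: by end_near. Qed.

End CesaroMean.

Lemma cvg_mx_entries (T : puniformType) m n (f : nat -> 'M[T]_(m, n))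
  (l : 'M[T]_(m, n)) :
  (forall i j, (fun k => f k i j) @ \oo --> l i j) -> f @ \oo --> l.
Proof.
move=> fl; apply/cvg_mx_entourageP => A entA.
suff : \forall k \near \oo, forall i j, (l i j, f k i j) \in A by [].
apply: (@filter_forall nat 'I_m (fun i k => forall j, (l i j, f k i j) \in A)) => i.
apply: (@filter_forall nat 'I_n (fun j k => (l i j, f k i j) \in A)) => j.
have near_l : \forall k \near \oo, A (l i j, f k i j).
  by apply: (cvg_entourage (fl i j) entA); exact: fmap_filter.
by apply: filterS near_l => k; rewrite inE.
Qed.

Section PermOrbit.
Context {R : numFieldType} {p : nat} (pi : {perm 'I_p}).
Implicit Type f : 'I_p -> R.

Local Notation N := #[pi]%g.

Definition orbit_mean f i : R := N%:R^-1 * \sum_(k < N) f ((pi ^+ k)%g i).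

Definition orbit_potential f i : R :=
  N%:R^-1 * \sum_(k < N) \sum_(l < k) f ((pi ^+ l)%g i).

Lemma perm_expS_apply (i : 'I_p) k : (pi ^+ k)%g (pi i) = (pi ^+ k.+1)%g i.
Proof. by rewrite expgS permM. Qed.

Lemma order_neq0 : (N%:R : R) != 0.
Proof. by rewrite pnatr_eq0 -lt0n order_gt0. Qed.

Lemma orbit_mean_perm f i : orbit_mean f (pi i) = orbit_mean f i.
Proof.
rewrite /orbit_mean; congr (_ * _).
under eq_bigr => k _ do rewrite perm_expS_apply.
apply: (@addrI _ (f ((pi ^+ 0)%g i))).
rewrite -(big_ord_recl _ (fun k => f ((pi ^+ k)%g i))).
by rewrite big_ord_recr /= expg_order addrC.
Qed.

Lemma orbit_potential_perm f i :
  orbit_potential f i - orbit_potential f (pi i) = f i - orbit_mean f i.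
Proof.
rewrite /orbit_potential /orbit_mean -!mulrBr -!sumrB.
under eq_bigr => k _ do under [X in _ - X]eq_bigr => l _ do rewrite perm_expS_apply.
under eq_bigr => k _ do
  rewrite -sumrB (@sumr_ord_telescope R (fun l => f ((pi ^+ l)%g i))).
rewrite sumrB sumr_const card_ord mulrBr expg0 perm1.
by rewrite -[f i *+ N]mulr_natr mulrCA mulVf ?mulr1 // order_neq0.
Qed.

End PermOrbit.

Section PermAverage.
Context {R : realType} {p : nat} (alpha : R) (pi : {perm 'I_p}).
Hypothesis alpha01 : 0 <= alpha <= 1.
Implicit Type f : 'I_p -> R.

Definition perm_avg f j : R := alpha * f j + (1 - alpha) * f (pi j).

Lemma perm_avg_norm_le {f} {B : R} :
  (forall j, `|f j| <= B) -> forall j, `|perm_avg f j| <= B.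
Proof.
move=> fB j; have /andP[a0 a1] := alpha01.
apply: le_trans (ler_normD _ _) _.
rewrite !normrM (ger0_norm a0) (@ger0_norm _ (1 - alpha)) ?subr_ge0 //.
have := fB j; have := fB (pi j); nra.
Qed.

Lemma iter_perm_avg_norm_le {f} {B : R} :
  (forall j, `|f j| <= B) -> forall n j, `|iter n perm_avg f j| <= B.
Proof. by move=> fB; elim=> [|n IH] //=; exact: perm_avg_norm_le. Qed.

Lemma norm_le_sum_norm f j : `|f j| <= \sum_(i < p) `|f i|.
Proof. by rewrite (bigD1 j) //= lerDl sumr_ge0. Qed.

Lemma iter_perm_avg_coboundary f : alpha != 1 ->
  exists g, forall n i, iter n perm_avg f i =
    orbit_mean pi f i + iter n perm_avg g i - iter n.+1 perm_avg g i.
Proof.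
(* g - perm_avg g = (1 - alpha) (g - g o pi), and orbit_potential_perm
   identifies the latter difference. *)
move=> a1; exists (fun i => (1 - alpha)^-1 * orbit_potential pi f i).
elim=> [|n IH] i.
  have a1' : 1 - alpha != 0 by rewrite subr_eq0 eq_sym.
  rewrite /= /perm_avg -[f i](subrK (orbit_mean pi f i)) -orbit_potential_perm.
  by field.
rewrite !iterS {1}/perm_avg !IH orbit_mean_perm /perm_avg !iterS; ring.
Qed.

Lemma cvg_cesaro_iter_perm_avg f j :
  cvgn (cesaro_mean (fun n => iter n perm_avg f j)).
Proof.
apply/cvg_ex; have [a1|a1] := eqVneq alpha 1.
  have iterE n : iter n perm_avg f = f.
    elim: n => [|n IH] //=; rewrite IH; apply/funext => i.
    by rewrite /perm_avg a1; ring.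
  exists (f j); under eq_fun => n do rewrite iterE.
  by apply: cvg_cesaro_mean; exact: cvg_cst.
have [g fE] := iter_perm_avg_coboundary f a1.
exists (orbit_mean pi f j).
apply: (cvg_cesaro_mean_coboundary (h := fun n => iter n perm_avg g j) (fE^~ j)).
by move=> n; apply: iter_perm_avg_norm_le => i; exact: norm_le_sum_norm.
Qed.

End PermAverage.

Section ValphaCoordinates.
Variables (R : realType) (p : nat) (alpha : R) (pi : {perm 'I_p}).

Local Notation V := (@Valpha R p.+1 alpha pi).
Local Notation front j := (widen_ord (leq_pred p.+1) j).

Lemma xlast_ord_max (x : 'rV[R]_p.+1) : xlast x = x 0 ord_max.
Proof. by rewrite /xlast (big_pred1 ord_max) // => i /=; rewrite -val_eqE. Qed.

Lemma sum_coord_front_last (x : 'rV[R]_p.+1) :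
  \sum_(i < p.+1) x 0 i = \sum_(j < p) x 0 (front j) + x 0 ord_max.
Proof.
rewrite big_ord_recr /=; congr (_ + _); apply: eq_bigr => j _.
by congr (x 0 _); apply: val_inj.
Qed.

Lemma Valpha_front x j : V x 0 (front j) =
  2 * x 0 ord_max * (alpha * x 0 (front j) + (1 - alpha) * x 0 (front (pi j))).
Proof. by rewrite /Valpha mxE /= valK xlast_ord_max. Qed.

Lemma Valpha_last x : V x 0 ord_max =
  x 0 ord_max ^+ 2 + (\sum_(j < p) x 0 (front j)) ^+ 2.
Proof.
rewrite /Valpha mxE /= insubF ?ltnn // xlast_ord_max; congr (_ + _ ^+ 2).
rewrite big_mkcond big_ord_recr /= ltnn addr0; apply: eq_bigr => j _.
by rewrite ltn_ord; congr (x 0 _); apply: val_inj.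
Qed.

Section Trajectory.
Variable x : 'rV[R]_p.+1.
Hypothesis x_simplex : simplex x.

Definition last_coord n : R := iter n V x 0 ord_max.
Definition front_coord n j : R := iter n V x 0 (front j).
Definition front_mass n : R := \sum_(j < p) front_coord n j.

Lemma last_coordS n : last_coord n.+1 = last_coord n ^+ 2 + front_mass n ^+ 2.
Proof. by rewrite /last_coord iterS Valpha_last. Qed.

Lemma front_coordS n j :
  front_coord n.+1 j = 2 * last_coord n * perm_avg alpha pi (front_coord n) j.
Proof. by rewrite /front_coord iterS Valpha_front. Qed.

Lemma front_massS n : front_mass n.+1 = 2 * last_coord n * front_mass n.
Proof.
rewrite /front_mass; under eq_bigr => j _ do rewrite front_coordS.
rewrite -mulr_sumr /perm_avg big_split /= -!mulr_sumr.
rewrite -(reindex_inj (@perm_inj _ pi) (P := xpredT) (F := front_coord n)) /=; ring.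
Qed.

Lemma last_coord_add_front_mass n : last_coord n + front_mass n = 1.
Proof.
elim: n => [|n IH]; first by rewrite addrC -sum_coord_front_last; case: x_simplex.
have -> : last_coord n.+1 + front_mass n.+1 = (last_coord n + front_mass n) ^+ 2.
  by rewrite last_coordS front_massS; ring.
by rewrite IH expr1n.
Qed.

Lemma last_coord_mul_front_mass_ge0 n : 0 <= last_coord n * front_mass n.
Proof.
elim: n => [|n IH].
  have [coord_ge0 _] := x_simplex.
  by apply: mulr_ge0; [|apply: sumr_ge0 => j _]; exact: coord_ge0.
have -> : last_coord n.+1 * front_mass n.+1 =
    2 * (last_coord n ^+ 2 + front_mass n ^+ 2) * (last_coord n * front_mass n).
  by rewrite last_coordS front_massS; ring.
by rewrite mulr_ge0 // mulr_ge0 // addr_ge0 ?sqr_ge0.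
Qed.

Lemma last_coordS_bounds n : 1 / 2 <= last_coord n.+1 <= 1.
Proof.
have := last_coord_add_front_mass n; have := sqr_ge0 (last_coord n - front_mass n).
have := last_coord_mul_front_mass_ge0 n.
by rewrite last_coordS => *; apply/andP; split; nra.
Qed.

Lemma cvg_last_coord : cvgn last_coord.
Proof.
suff /cvg_ex[l tl] : cvgn (fun n => last_coord n.+1).
  by apply/cvg_ex; exists l; rewrite -cvg_shiftS.
apply: nonincreasing_is_cvgn.
  apply/nonincreasing_seqP => n; have /andP[] := last_coordS_bounds n.
  have := last_coord_add_front_mass n.+1.
  by rewrite [last_coord n.+2]last_coordS; nra.
by exists (1 / 2) => _ [n _ <-]; have /andP[] := last_coordS_bounds n.
Qed.

Definition growth n : R := \prod_(k < n) (2 * last_coord k).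

Lemma front_coordE n j :
  front_coord n j = growth n * iter n (perm_avg alpha pi) (front_coord 0) j.
Proof.
elim: n j => [|n IH] j; first by rewrite /growth big_ord0 mul1r.
by rewrite front_coordS /perm_avg !IH /growth big_ord_recr /=; ring.
Qed.

Lemma front_massE n : front_mass n = growth n * front_mass 0.
Proof.
elim: n => [|n IH]; first by rewrite /growth big_ord0 mul1r.
by rewrite front_massS IH /growth big_ord_recr /=; ring.
Qed.

Hypothesis alpha01 : 0 <= alpha <= 1.

Lemma cvg_cesaro_mean_last_coord : cvgn (cesaro_mean last_coord).
Proof.
by apply/cvg_ex; exists (limn last_coord); apply/cvg_cesaro_mean/cvg_last_coord.
Qed.

Lemma cvg_cesaro_mean_front_coord j : cvgn (cesaro_mean (front_coord^~ j)).
Proof.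
have [coord_ge0 _] := x_simplex.
have front0_bound k : `|front_coord 0 k| <= \sum_(i < p) `|front_coord 0 i|.
  exact: norm_le_sum_norm.
have [mass0|mass0] := eqVneq (front_mass 0) 0.
  have front0 k : front_coord 0 k = 0.
    by apply: (psumr_eq0P _ mass0) => // i _; exact: coord_ge0.
  suff -> : front_coord^~ j = fun=> 0.
    by apply/cvg_ex; exists 0; apply: cvg_cesaro_mean; exact: cvg_cst.
  apply/funext => n; rewrite front_coordE; apply/eqP; rewrite mulf_eq0 orbC.
  by rewrite -normr_le0 iter_perm_avg_norm_le // => k; rewrite front0 normr0.
have /cvg_ex[q avg_q] := cvg_cesaro_iter_perm_avg _ pi alpha01 (front_coord 0) j.
apply/cvg_ex; exists ((1 - limn last_coord) / front_mass 0 * q).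
rewrite (funext (front_coordE^~ j)).
apply: (cvg_cesaro_mean_mul _ (iter_perm_avg_norm_le _ _ alpha01 front0_bound^~ j)
  avg_q).
have -> : growth = fun n => (1 - last_coord n) / front_mass 0.
  apply/funext => n; rewrite -(last_coord_add_front_mass n) addrC addKr.
  by rewrite front_massE mulfK.
apply: cvgM; last exact: cvg_cst.
by apply: cvgB; [exact: cvg_cst | exact: cvg_last_coord].
Qed.

Lemma cvg_cesaro_mean_coord i : cvgn (cesaro_mean (fun n => iter n V x 0 i)).
Proof.
have [lt_ip|ge_ip] := ltnP i p.
  have -> : i = front (Ordinal lt_ip) by apply: val_inj.
  exact: cvg_cesaro_mean_front_coord.
have -> : i = ord_max by apply/val_inj/eqP; rewrite eqn_leq ge_ip -ltnS ltn_ord.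
exact: cvg_cesaro_mean_last_coord.
Qed.

End Trajectory.

End ValphaCoordinates.

Theorem corollary2 (R : realType) (m : nat) (alpha : R)
  (pi : {perm 'I_(m.-1)}) :
  (2 <= m)%N -> 0 <= alpha <= 1 ->
  forall x : 'rV[R]_m, simplex x ->
  exists l : 'rV[R]_m,
    (fun n : nat => (n%:R)^-1 *: \sum_(k < n) iter k (Valpha alpha pi) x)
      @ \oo --> l.
Proof.
move=> m_ge2 alpha01; case: m pi m_ge2 => [|p] // pi _ x x_simplex.
pose coord_mean i := cesaro_mean (fun k => iter k (Valpha alpha pi) x 0 i).
exists (\row_i limn (coord_mean i)); apply: cvg_mx_entries => i0 i.
rewrite ord1 mxE (_ : (fun k => _) = coord_mean i); last first.
  by apply/funext => k; rewrite /coord_mean /cesaro_mean mxE summxE.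
exact: cvg_cesaro_mean_coord.
Qed.
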